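(* Let $\Gamma$ be a set of axioms. Then $\mathsf{ICK}\oplus\Gamma$ is sound and complete with respect to the class of conditional Esakia spaces that validate $\Gamma$.
   Context: Formulas are generated by $\phi ::= p\mid\bot\mid\phi\wedge\phi\mid\phi\vee\phi\mid\phi\to\phi\mid\phi\mathrel{\Box\!\!\!\rightarrow}\phi$. $\mathsf{ICK}\oplus\Gamma$ is the smallest set of formulas containing intuitionistic propositional logic, $\Gamma$, $(p\mathrel{\Box\!\!\!\rightarrow}(q\wedge r))\leftrightarrow((p\mathrel{\Box\!\!\!\rightarrow} q)\wedge(p\mathrel{\Box\!\!\!\rightarrow} r))$ and $(p\mathrel{\Box\!\!\!\rightarrow}\top)\leftrightarrow\top$, closed under uniform substitution, modus ponens, and the congruence rules (from $p\leftrightarrow q$ infer $(p\mathrel{\Box\!\!\!\rightarrow} r)\leftrightarrow(q\mathrel{\Box\!\!\!\rightarrow} r)$ and $(r\mathrel{\Box\!\!\!\rightarrow} p)\leftrightarrow(r\mathrel{\Box\!\!\!\rightarrow} q)$). A conditional Esakia space is an Esakia space $(X,\leq,\tau)$ with relations $\{R_a\mid a \text{ a clopen upset}\}$ such that $\{x\mid R_a[x]\subseteq b\}$ is clopen for all clopen upsets $a,b$, $(\leq\circ R_a\circ\leq)=R_a$, and each $R_a[x]$ is closed. Formulas are interpreted with valuations assigning clopen upsets to proposition letters, intuitionistic clauses as in Kripke semantics, and $x\models\phi\mathrel{\Box\!\!\!\rightarrow}\psi$ iff every $y$ with $xR_{V(\phi)}y$ satisfies $\psi$; a space validates $\phi$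 if $\phi$ is true at every world under every clopen valuation. *)

From mathcomp Require Import all_boot all_classical topology.

Set Implicit Arguments.
Unset Strict Implicit.
Unset Printing Implicit Defensive.

Local Open Scope classical_set_scope.

Inductive form : Type :=
  | Var : nat -> form
  | Bot : form
  | And : form -> form -> form
  | Or  : form -> form -> form
  | Imp : form -> form -> form
  | Cond : form -> form -> form.

Definition Top : form := Imp Bot Bot.
Definition Iff (a b : form) : form := And (Imp a b) (Imp b a).

Fixpoint subst (s : nat -> form) (f : form) : form :=
  match f with
  | Var n => s n
  | Bot => Bot
  | And a b => And (subst s a) (subst s b)
  | Or a b => Or (subst s a) (subst s b)
  | Imp a b => Imp (subst s a) (subst s b)
  | Cond a b => Cond (subst s a) (subst s b)
  end.

Inductive ICK (Gamma : form -> Prop) : form -> Prop :=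
  | ipc_k a b : ICK Gamma (Imp a (Imp b a))
  | ipc_s a b c :
      ICK Gamma (Imp (Imp a (Imp b c)) (Imp (Imp a b) (Imp a c)))
  | ipc_and1 a b : ICK Gamma (Imp (And a b) a)
  | ipc_and2 a b : ICK Gamma (Imp (And a b) b)
  | ipc_andI a b : ICK Gamma (Imp a (Imp b (And a b)))
  | ipc_or1 a b : ICK Gamma (Imp a (Or a b))
  | ipc_or2 a b : ICK Gamma (Imp b (Or a b))
  | ipc_orE a b c :
      ICK Gamma (Imp (Imp a c) (Imp (Imp b c) (Imp (Or a b) c)))
  | ipc_efq a : ICK Gamma (Imp Bot a)
  | ick_gamma g : Gamma g -> ICK Gamma g
  | ick_and :
      ICK Gamma (Iff (Cond (Var 0) (And (Var 1) (Var 2)))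
                     (And (Cond (Var 0) (Var 1)) (Cond (Var 0) (Var 2))))
  | ick_top : ICK Gamma (Iff (Cond (Var 0) Top) Top)
  | ick_subst s f : ICK Gamma f -> ICK Gamma (subst s f)
  | ick_mp a b : ICK Gamma (Imp a b) -> ICK Gamma a -> ICK Gamma b
  | ick_congl p q r :
      ICK Gamma (Iff p q) -> ICK Gamma (Iff (Cond p r) (Cond q r))
  | ick_congr p q r :
      ICK Gamma (Iff p q) -> ICK Gamma (Iff (Cond r p) (Cond r q)).

Section Spaces.
Variable X : topologicalType.
Variable le : X -> X -> Prop.

Definition upset (A : set X) : Prop := forall x y, le x y -> A x -> A y.
Definition downclosure (A : set X) : set X := [set x | exists2 y, A y & le x y].
Definition clopen_upset (A : set X) : Prop := clopen A /\ upset A.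

Definition esakia_space : Prop :=
  (forall x, le x x) /\
  (forall x y, le x y -> le y x -> x = y) /\
  (forall x y z, le x y -> le y z -> le x z) /\
  compact [set: X] /\
  (forall x y, ~ le x y -> exists U, [/\ clopen_upset U, U x & ~ U y]) /\
  (forall U, clopen U -> clopen (downclosure U)).

(* R a x y  means  x R_a y ; only the values at clopen upsets a matter. *)
Definition image_of (R : set X -> X -> X -> Prop) (a : set X) (x : X) : set X :=
  [set y | R a x y].

Definition conditional_esakia_space (R : set X -> X -> X -> Prop) : Prop :=
  [/\ esakia_space,
      (forall a b, clopen_upset a -> clopen_upset b ->
         clopen [set x | image_of R a x `<=` b]),
      (forall a, clopen_upset a ->
         forall x y, R a x y <->
           exists x', exists y', [/\ le x x', R a x' y' & le y' y]) &
      (forall a, clopen_upset a -> forall x, closed (image_of R a x))].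

Definition valuation (V : nat -> set X) : Prop := forall n, clopen_upset (V n).

Fixpoint truth (R : set X -> X -> X -> Prop) (V : nat -> set X) (f : form)
  : set X :=
  match f with
  | Var n => V n
  | Bot => set0
  | And a b => truth R V a `&` truth R V b
  | Or a b => truth R V a `|` truth R V b
  | Imp a b => [set x | forall y, le x y -> truth R V a y -> truth R V b y]
  | Cond a b => [set x | forall y, R (truth R V a) x y -> truth R V b y]
  end.

Definition valid (R : set X -> X -> X -> Prop) (f : form) : Prop :=
  forall V, valuation V -> forall x, truth R V f x.

End Spaces.

(* Soundness: in a conditional Esakia space every truth set is a clopen upset
   (implication is the complement of the down-closure of a clopen set, and the
   box clause is clopen by assumption), so the axioms of ICK are valid and the
   rules preserve validity.
   Completeness: the prime theories of ICK (+) Gamma, ordered by inclusion and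
   topologised by the basic opens {x | a \in x, b \notin x}, form an Esakia
   space; by compactness every clopen upset is the set [a] of theories
   containing some formula a, and x R_[a] y is defined by
   {d | a []-> d \in x} <= y.  Lindenbaum's lemma gives the truth lemma
   "x satisfies phi iff phi \in x", and Gamma holds in this space since theories
   contain all substitution instances of Gamma.  So a formula valid on all such
   spaces lies in every prime theory, hence is a theorem. *)

From HB Require Import structures.
From mathcomp Require Import all_boot all_classical topology.

Set Implicit Arguments.
Unset Strict Implicit.
Unset Printing Implicit Defensive.
Local Open Scope classical_set_scope.

Section Derivations.
Variable Gamma : form -> Prop.
Local Notation thm := (ICK Gamma).

Inductive derivable (D : set form) : form -> Prop :=
  | derivable_hyp a : D a -> derivable D a
  | derivable_thm a : thm a -> derivable D a
  | derivable_mp a b : derivable D (Imp a b) -> derivable D a -> derivable D b.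

Lemma thm_imp_refl a : thm (Imp a a).
Proof.
apply: ick_mp (ipc_k _ a a).
exact: ick_mp (ipc_s _ a (Imp a a) a) (ipc_k _ a (Imp a a)).
Qed.

Lemma derivable_mono D D' a : D `<=` D' -> derivable D a -> derivable D' a.
Proof.
move=> sDD'; elim=> [c /sDD'|c|c d _ IHcd _ IHc].
- exact: derivable_hyp.
- exact: derivable_thm.
- exact: derivable_mp IHcd IHc.
Qed.

Lemma deduction D a b : derivable (D `|` [set a]) b -> derivable D (Imp a b).
Proof.
elim=> [c [Dc| ->]|c thm_c|c d _ IHcd _ IHc].
- exact: derivable_mp (derivable_thm _ (ipc_k _ _ _)) (derivable_hyp Dc).
- exact/derivable_thm/thm_imp_refl.
- exact: derivable_mp (derivable_thm _ (ipc_k _ _ _)) (derivable_thm _ thm_c).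
- exact: derivable_mp (derivable_mp (derivable_thm _ (ipc_s _ _ _ _)) IHcd) IHc.
Qed.

Lemma derivable0 a : derivable set0 a -> thm a.
Proof. by elim=> // c d _ thm_cd _ thm_c; exact: ick_mp thm_cd thm_c. Qed.

Lemma deduction1 a b : derivable [set a] b -> thm (Imp a b).
Proof. by move=> der_b; apply/derivable0/deduction; rewrite set0U. Qed.

Lemma thm_Top : thm Top.
Proof. exact: ipc_efq. Qed.

Lemma thm_iffI p q : thm (Imp p q) -> thm (Imp q p) -> thm (Iff p q).
Proof. by move=> pq qp; exact: ick_mp (ick_mp (ipc_andI _ _ _) pq) qp. Qed.

Lemma thm_iffl p q : thm (Iff p q) -> thm (Imp p q).
Proof. exact: ick_mp (ipc_and1 _ _ _). Qed.

Lemma thm_iffr p q : thm (Iff p q) -> thm (Imp q p).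
Proof. exact: ick_mp (ipc_and2 _ _ _). Qed.

Lemma thm_iff_sym p q : thm (Iff p q) -> thm (Iff q p).
Proof.
by move=> pq; apply: thm_iffI; [exact: thm_iffr pq|exact: thm_iffl pq].
Qed.

Lemma thm_iff_Top b : thm b -> thm (Iff Top b).
Proof.
move=> thm_b; apply: thm_iffI; first exact: ick_mp (ipc_k _ _ _) thm_b.
exact: ick_mp (ipc_k _ _ _) thm_Top.
Qed.

Lemma thm_iff_And p q : thm (Imp p q) -> thm (Iff p (And p q)).
Proof.
move=> pq; apply: thm_iffI; last exact: ipc_and1.
apply: deduction1; have p_hyp : derivable [set p] p by exact: derivable_hyp.
apply: derivable_mp (derivable_mp (derivable_thm _ (ipc_andI _ _ _)) p_hyp) _.
exact: derivable_mp (derivable_thm _ pq) p_hyp.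
Qed.

Lemma thm_And_mp a b : thm (Imp (And (Imp a b) a) b).
Proof.
apply: deduction1; set h := And _ _.
have h_hyp : derivable [set h] h by exact: derivable_hyp.
exact: derivable_mp (derivable_mp (derivable_thm _ (ipc_and1 _ _ _)) h_hyp)
  (derivable_mp (derivable_thm _ (ipc_and2 _ _ _)) h_hyp).
Qed.

Lemma thm_Cond_And a b c :
  thm (Iff (Cond a (And b c)) (And (Cond a b) (Cond a c))).
Proof.
exact: (ick_subst (fun n => match n with 0 => a | 1 => b | _ => c end)
  (ick_and Gamma)).
Qed.

Lemma thm_Cond_Top a : thm (Iff (Cond a Top) Top).
Proof. exact: (ick_subst (fun=> a) (ick_top Gamma)). Qed.

Definition deductively_closed (T : set form) := forall a, derivable T a -> T a.

Definition prime_theory (T : set form) :=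
  [/\ deductively_closed T, ~ T Bot & forall a b, T (Or a b) -> T a \/ T b].

Section Theories.
Variable T : set form.
Hypothesis closedT : deductively_closed T.

Lemma theory_thm a : thm a -> T a.
Proof. by move=> thm_a; apply: closedT; exact: derivable_thm. Qed.

Lemma theory_mp a b : T (Imp a b) -> T a -> T b.
Proof.
move=> Tab Ta; apply: closedT.
exact: derivable_mp (derivable_hyp Tab) (derivable_hyp Ta).
Qed.

Lemma theory_thm_mp a b : thm (Imp a b) -> T a -> T b.
Proof. by move/theory_thm; exact: theory_mp. Qed.

Lemma theory_iff a b : thm (Iff a b) -> T a -> T b.
Proof. by move/thm_iffl; exact: theory_thm_mp. Qed.

Lemma theory_And a b : T (And a b) <-> T a /\ T b.
Proof.
split=> [Tab|[Ta Tb]].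
  by split; apply: theory_thm_mp Tab; [exact: ipc_and1|exact: ipc_and2].
exact: theory_mp (theory_thm_mp (ipc_andI _ _ _) Ta) Tb.
Qed.

Lemma theory_Cond_And a b c :
  T (Cond a (And b c)) <-> T (Cond a b) /\ T (Cond a c).
Proof.
rewrite -theory_And; split; apply: theory_iff.
  exact: thm_Cond_And.
exact/thm_iff_sym/thm_Cond_And.
Qed.

Lemma theory_Cond_mono a b c : thm (Imp b c) -> T (Cond a b) -> T (Cond a c).
Proof.
move=> /thm_iff_And /(ick_congr a) bc /(theory_iff bc).
by case/theory_Cond_And.
Qed.

Lemma deductively_closed_Cond a : deductively_closed [set c | T (Cond a c)].
Proof.
move=> c; elim=> [d //|d thm_d|d e _ Tde _ Td].
- apply: theory_iff (ick_congr _ (thm_iff_Top thm_d)) _.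
  exact: theory_iff (thm_iff_sym (thm_Cond_Top a)) (theory_thm thm_Top).
- by apply: theory_Cond_mono (thm_And_mp d e) _; apply/theory_Cond_And.
Qed.

End Theories.

Lemma prime_theory_Or T a b : prime_theory T -> T (Or a b) <-> T a \/ T b.
Proof.
case=> closedT _ primeT; split; first exact: primeT.
by case; apply: theory_thm_mp => //; [exact: ipc_or1|exact: ipc_or2].
Qed.

Lemma derivable_chain D (F : set (set form)) a : total_on F subset ->
  derivable (D `|` \bigcup_(S in F) S) a ->
  derivable D a \/ exists2 S, F S & derivable (D `|` S) a.
Proof.
move=> totF; elim=> [c [Dc|[S FS Sc]]|c thm_c|c d _ IHcd _ IHc].
- by left; exact: derivable_hyp.
- by right; exists S => //; apply: derivable_hyp; right.
- by left; exact: derivable_thm.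
have widen S S' e :
    S `<=` S' -> derivable (D `|` S) e -> derivable (D `|` S') e.
  by move=> sSS'; apply: derivable_mono => x [Dx|/sSS' S'x]; [left|right].
have widen0 S e : derivable D e -> derivable (D `|` S) e.
  by apply: derivable_mono => x Dx; left.
case: IHcd => [Dcd|[S FS Scd]]; case: IHc => [Dc|[S' FS' S'c]].
- by left; exact: derivable_mp Dcd Dc.
- by right; exists S' => //; exact: derivable_mp (widen0 _ _ Dcd) S'c.
- by right; exists S => //; exact: derivable_mp Scd (widen0 _ _ Dc).
have [sSS'|sS'S] := totF _ _ FS FS'.
- by right; exists S' => //; exact: derivable_mp (widen _ _ _ sSS' Scd) S'c.
- by right; exists S => //; exact: derivable_mp Scd (widen _ _ _ sS'S S'c).
Qed.

(* Zorn yields a maximal [Y] with [D `|` Y] not deriving [b]; maximality makes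
   [D `|` Y] closed and prime. *)
Lemma lindenbaum D b : ~ derivable D b ->
  exists2 T, prime_theory T & D `<=` T /\ ~ T b.
Proof.
move=> nDb.
have [Y [nYb Ymax]] : exists Y, ~ derivable (D `|` Y) b /\
    forall Y', Y `<` Y' -> derivable (D `|` Y') b.
  have [|Y [nYb Ymax]] := @Zorn_bigcup _ [set Y | ~ derivable (D `|` Y) b].
    by move=> F nFb totF /(derivable_chain totF) [//|[S FS]]; exact: nFb.
  by exists Y; split=> // Y' /Ymax; exact: contrapT.
set M := D `|` Y.
have extend a : ~ M a -> derivable (M `|` [set a]) b.
  move=> nMa; rewrite /M -setUA; apply: Ymax; split; first by move=> x; left.
  by move=> /(_ a (or_intror erefl)) Ya; apply: nMa; right.
have closedM : deductively_closed M.
  move=> a Ma; apply: contrapT => nMa.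
  exact: nYb (derivable_mp (deduction (extend _ nMa)) Ma).
exists M; last by split=> [x Dx|Mb]; [left|apply/nYb/derivable_hyp].
split=> // [MBot|a c Mac].
  exact/nYb/(derivable_mp (derivable_thm _ (ipc_efq _ _)) (derivable_hyp MBot)).
apply: contrapT => /not_orP[nMa nMc]; apply/nYb.
apply: derivable_mp (derivable_hyp Mac).
apply: derivable_mp (deduction (extend _ nMc)).
exact: derivable_mp (derivable_thm _ (ipc_orE _ _ _ _))
  (deduction (extend _ nMa)).
Qed.

End Derivations.

(* [compact_cover] of the library is only stated for pointed spaces. *)
Lemma compact_finite_subcover (T : topologicalType) (I : eqType)
    (A : set T) (D : set I) (f : I -> set T) :
  compact A -> (forall i, D i -> open (f i)) -> A `<=` \bigcup_(i in D) f i ->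
  exists2 s : seq I, (forall i, i \in s -> D i) &
    A `<=` \bigcup_(i in [set i | i \in s]) f i.
Proof.
move=> cptA open_f Af; apply: contrapT => /forall2NP no_subcover.
pose B (s : seq I) := A `&` [set x | forall i, i \in s -> ~ f i x].
pose Ds := [set s : seq I | forall i, i \in s -> D i].
have filterB : Filter (filter_from Ds B).
  apply: filter_from_filter; first by exists [::].
  move=> s1 s2 Ds1 Ds2; exists (s1 ++ s2).
    by move=> i; rewrite mem_cat => /orP[/Ds1|/Ds2].
  move=> x [Ax nfx].
  by split; split=> // i si; apply: nfx; rewrite mem_cat si ?orbT.
have properB : ProperFilter (filter_from Ds B).
  apply: (filter_from_proper filterB) => s Dss.
  have [//|/nonsubset [x [Ax nfx]]] := no_subcover s.
  by exists x; split=> // i si fi_x; apply: nfx; exists i.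
have [|p [Ap clp]] := cptA _ properB; first by exists [::] => // x [].
have [i Di fip] := Af p Ap.
have Bi : filter_from Ds B (B [:: i]).
  by exists [:: i] => // j; rewrite inE => /eqP ->.
have fi_p : nbhs p (f i) by apply: open_nbhs_nbhs; split=> //; exact: open_f.
have [x [[_ nfx] fi_x]] := clp _ _ Bi fi_p.
by apply: (nfx i) fi_x; rewrite inE.
Qed.

Record ptheory (Gamma : form -> Prop) :=
  PTheory { th : set form; thP : prime_theory Gamma th }.

HB.instance Definition _ := gen_eqMixin form.
HB.instance Definition _ := gen_choiceMixin form.
HB.instance Definition _ Gamma := gen_eqMixin (ptheory Gamma).
HB.instance Definition _ Gamma := gen_choiceMixin (ptheory Gamma).

Section PrimeTheories.
Variable Gamma : form -> Prop.
Implicit Types x y : ptheory Gamma.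

Lemma ptheory_closed x : deductively_closed Gamma (th x).
Proof. by case: x => ? []. Qed.
#[global] Arguments ptheory_closed : clear implicits.

Lemma ptheory_Bot x : ~ th x Bot.
Proof. by case: x => ? []. Qed.

Lemma ptheory_thm x a : ICK Gamma a -> th x a.
Proof. exact: theory_thm (ptheory_closed x) _. Qed.

Lemma ptheory_mp x a b : th x (Imp a b) -> th x a -> th x b.
Proof. exact: theory_mp (ptheory_closed x) _ _. Qed.

Lemma ptheory_And x a b : th x (And a b) <-> th x a /\ th x b.
Proof. exact: theory_And (ptheory_closed x) _ _. Qed.

Lemma ptheory_Or x a b : th x (Or a b) <-> th x a \/ th x b.
Proof. exact: prime_theory_Or (thP x). Qed.

Lemma prime_extension D b : ~ derivable Gamma D b ->
  exists2 x : ptheory Gamma, D `<=` th x & ~ th x b.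
Proof. by case/lindenbaum => T primeT [DT nTb]; exists (PTheory primeT). Qed.

Definition canonical_open (A : set (ptheory Gamma)) := forall x, A x ->
  exists a b, [/\ th x a, ~ th x b & forall y, th y a -> ~ th y b -> A y].

Lemma canonical_openT : canonical_open setT.
Proof.
move=> x _; exists Top, Bot; split=> //; last exact: ptheory_Bot.
exact/ptheory_thm/thm_Top.
Qed.

Lemma canonical_openI : setI_closed canonical_open.
Proof.
move=> A B oA oB x [/oA [a [b [xa xb abA]]] /oB [a' [b' [xa' xb' abB]]]].
exists (And a a'), (Or b b'); split.
- exact/ptheory_And.
- by case/ptheory_Or.
- move=> y /ptheory_And [ya ya'] /ptheory_Or /not_orP [yb yb'].
  by split; [exact: abA|exact: abB].
Qed.

Lemma canonical_open_bigcup (I : Type) (f : I -> set (ptheory Gamma)) :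
  (forall i, canonical_open (f i)) -> canonical_open (\bigcup_i f i).
Proof.
move=> open_f x [i _ /open_f [a [b [xa xb abf]]]].
by exists a, b; split=> // y ya yb; exists i => //; exact: abf.
Qed.

End PrimeTheories.

HB.instance Definition _ Gamma := isOpenTopological.Build (ptheory Gamma)
  (@canonical_openT Gamma) (@canonical_openI Gamma)
  (@canonical_open_bigcup Gamma).

Section CanonicalSpace.
Variable Gamma : form -> Prop.
Implicit Types x y : ptheory Gamma.
Local Notation thm := (ICK Gamma).
Local Notation U a := [set x : ptheory Gamma | th x a].

Definition canonical_le x y := th x `<=` th y.

Lemma ptheory_Imp x a b :
  th x (Imp a b) <-> forall y, canonical_le x y -> th y a -> th y b.
Proof.
split=> [xab y xy ya|xab]; first exact: ptheory_mp (xy _ xab) ya.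
apply: contrapT => nxab.
have [|y xa_y nyb] := @prime_extension Gamma (th x `|` [set a]) b.
  by move/deduction/(ptheory_closed x).
by apply/nyb/xab => [c xc|]; apply: xa_y; [left|right].
Qed.

Lemma ptheory_Cond x a c :
  th x (Cond a c) <-> forall y, [set d | th x (Cond a d)] `<=` th y -> th y c.
Proof.
split=> [xac y xy|xac]; first exact: xy.
apply: contrapT => nxac.
have [|y xy nyc] := @prime_extension Gamma [set d | th x (Cond a d)] c.
  by move/(deductively_closed_Cond (ptheory_closed x)).
exact/nyc/xac.
Qed.

Lemma ptheory_complete a : (forall x, th x a) -> thm a.
Proof.
move=> all_a; apply: contrapT => nthm_a.
have [|x _] := @prime_extension Gamma set0 a; last by [].
by move/derivable0.
Qed.

Lemma ptheory_complete_Imp a b : U a `<=` U b -> thm (Imp a b).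
Proof.
move=> ab; apply: contrapT => nthm_ab.
have [|x xa nxb] := @prime_extension Gamma [set a] b.
  by move/deduction1.
exact/nxb/ab/xa.
Qed.

Lemma open_U a : open (U a).
Proof. by move=> x xa; exists a, Bot; split=> //; exact: ptheory_Bot. Qed.

Lemma open_not_U b : open (~` U b).
Proof.
by move=> x xb; exists Top, b; split=> //; exact/ptheory_thm/thm_Top.
Qed.

Lemma clopen_U a : clopen (U a).
Proof. by split; [exact: open_U|rewrite -openC; exact: open_not_U]. Qed.

(* The limit of an ultrafilter [F] is the prime theory [{a | U a \in F}]. *)
Lemma compact_ptheory : compact [set: ptheory Gamma].
Proof.
rewrite compact_ultra => F UF FT.
have primeF : prime_theory Gamma [set a | F (U a)].
  split=> [a|/=|a b Fab].
  - elim=> [c //|c thm_c|c d _ Fcd _ Fc].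
      by apply: filterS FT => y _; exact: ptheory_thm.
    by apply: filterS (filterI Fcd Fc) => y [ycd yc]; exact: ptheory_mp ycd yc.
  - suff -> : U Bot = set0 by exact: filter_not_empty.
    by apply/seteqP; split=> y // /ptheory_Bot.
  - have [Fa|Fna] := in_ultra_setVsetC (U a) UF; [by left|right].
    by apply: filterS (filterI Fab Fna) => y [/ptheory_Or[]].
exists (PTheory primeF); split=> // A [B [oB Bx BA]].
have [a [b [Fa Fnb abB]]] := oB _ Bx.
have [Fb|Fnb'] := in_ultra_setVsetC (U b) UF; first by [].
by apply: filterS (filterI Fa Fnb') => y [ya yb]; exact/BA/abB.
Qed.

Lemma downclosure_basic a b :
  downclosure canonical_le (U a `&` ~` U b) = ~` U (Imp a b).
Proof.
apply/seteqP; split=> x /=.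
  by move=> [y [ya nyb] xy] /ptheory_Imp xab; exact/nyb/xab.
move=> /ptheory_Imp /existsNP [y /not_implyP [xy /not_implyP [ya nyb]]].
by exists y.
Qed.

Lemma ptheory_bigAnd (I : eqType) (s : seq I) (F : I -> form) x :
  th x (\big[And/Top]_(i <- s) F i) <-> forall i, i \in s -> th x (F i).
Proof.
elim: s => [|i s IHs].
  by rewrite big_nil; split=> // _; exact/ptheory_thm/thm_Top.
rewrite big_cons ptheory_And IHs; split=> [[xi xs] j|xs].
  by rewrite in_cons => /orP [/eqP ->|/xs].
by split=> [|j js]; apply: xs; rewrite in_cons ?eqxx ?js ?orbT.
Qed.

(* A clopen [C] is compact, hence a finite union of basic opens
   [U a `&` ~` U b]; the down-closure of each of them is [~` U (Imp a b)]. *)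
Lemma clopen_downclosure C : clopen C ->
  exists a, downclosure canonical_le C = ~` U a.
Proof.
move=> [oC cC].
have cptC : compact C := subclosed_compact cC compact_ptheory (@subsetT _ C).
pose basic (ab : form * form) := U ab.1 `&` ~` U ab.2.
have [|x /oC [a [b [xa xb abC]]]|] :=
  compact_finite_subcover cptC (D := [set ab | basic ab `<=` C]) (f := basic).
- by move=> ab _; apply: openI; [exact: open_U|exact: open_not_U].
- by exists (a, b) => //= y [ya yb]; exact: abC.
move=> D' D'C CD'.
exists (\big[And/Top]_(ab <- D') Imp ab.1 ab.2).
apply/seteqP; split=> x.
  move=> [y /CD' [ab D'ab aby] xy] /ptheory_bigAnd xD'.
  have : downclosure canonical_le (basic ab) x by exists y.
  by rewrite downclosure_basic; apply; exact: xD'.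
move=> /ptheory_bigAnd /existsNP [ab /not_implyP [D'ab nx_ab]].
have : (~` U (Imp ab.1 ab.2)) x by [].
rewrite -downclosure_basic => -[y aby xy].
by exists y => //; exact: (D'C ab D'ab).
Qed.

Lemma clopen_upsetP A : clopen_upset canonical_le A <-> exists a, A = U a.
Proof.
split=> [[cA uA]|[a ->]]; last first.
  by split; [exact: clopen_U|move=> x y xy; exact: xy].
have [a downA] := clopen_downclosure (clopenC set0 cA).
exists a; apply/seteqP; split=> x.
  move=> Ax; apply: contrapT => nxa.
  have : (~` U a) x by [].
  by rewrite -downA => -[y nAy xy]; exact/nAy/(uA x).
move=> xa; apply: contrapT => nAx.
have : downclosure canonical_le (~` A) x by exists x.
by rewrite downA.
Qed.

Definition canonical_rel (A : set (ptheory Gamma)) x y :=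
  exists a, A = U a /\ [set d | th x (Cond a d)] `<=` th y.

(* The congruence rule makes [canonical_rel] independent of the formula chosen
   to represent [A]. *)
Lemma canonical_rel_U a x y :
  canonical_rel (U a) x y <-> [set d | th x (Cond a d)] `<=` th y.
Proof.
split=> [[a' [aa' xy]] d xad|]; last by exists a.
have a_a' : thm (Iff a a').
  by apply: thm_iffI; apply: ptheory_complete_Imp => z; rewrite aa'.
exact/xy/(ptheory_mp (ptheory_thm x (thm_iffl (ick_congl d a_a')))).
Qed.

Lemma image_canonical_rel a b :
  [set x | image_of canonical_rel (U a) x `<=` U b] = U (Cond a b).
Proof.
apply/seteqP; split=> x /=.
  by move=> ab; apply/ptheory_Cond => y /canonical_rel_U; exact: ab.
by move=> /ptheory_Cond xab y /canonical_rel_U; exact: xab.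
Qed.

Lemma truth_canonical s f :
  truth canonical_le canonical_rel (fun n => U (s n)) f = U (subst s f).
Proof.
elim: f => [n|//|a IHa b IHb|a IHa b IHb|a IHa b IHb|a IHa b IHb] /=.
- by [].
- by apply/seteqP; split=> x // /ptheory_Bot.
- by rewrite IHa IHb; apply/seteqP; split=> x /ptheory_And.
- by rewrite IHa IHb; apply/seteqP; split=> x /ptheory_Or.
- by rewrite IHa IHb; apply/seteqP; split=> x /ptheory_Imp.
- by rewrite IHa IHb image_canonical_rel.
Qed.

Lemma canonical_valuation s : valuation canonical_le (fun n => U (s n)).
Proof. by move=> n; apply/clopen_upsetP; exists (s n). Qed.

Lemma canonical_le_anti x y : canonical_le x y -> canonical_le y x -> x = y.
Proof.
case: x y => [T primeT] [T' primeT'] TT' T'T.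
have eqT : T = T' by apply/seteqP.
by subst T'; rewrite (Prop_irrelevance primeT primeT').
Qed.

Lemma canonical_esakia : esakia_space canonical_le.
Proof.
split; first by move=> x; exact: subset_refl.
split; first exact: canonical_le_anti.
split; first by move=> x y z; exact: subset_trans.
split; first exact: compact_ptheory.
split=> [x y /existsNP [a /not_implyP [xa nya]]|C /clopen_downclosure [a ->]].
  by exists (U a); split=> //; apply/clopen_upsetP; exists a.
exact: clopenC set0 (clopen_U a).
Qed.

Lemma canonical_conditional_esakia :
  conditional_esakia_space canonical_le canonical_rel.
Proof.
split; first exact: canonical_esakia.
- move=> A B /clopen_upsetP [a ->] /clopen_upsetP [b ->].
  rewrite image_canonical_rel; exact: clopen_U.
- move=> A _ x y; split=> [Rxy|[x' [y' [xx' [a [-> x'y']] y'y]]]].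
    by exists x, y; split=> //; exact: subset_refl.
  by exists a; split=> // d xad; exact/y'y/x'y'/xx'.
- move=> A /clopen_upsetP [a ->] x.
  rewrite -openC; move=> y nxy.
  have /existsNP [d /not_implyP [xad nyd]] :
    ~ [set d | th x (Cond a d)] `<=` th y by move/canonical_rel_U.
  exists Top, d; split=> //; first exact/ptheory_thm/thm_Top.
  by move=> z _ nzd /canonical_rel_U xz; exact/nzd/xz.
Qed.

Lemma canonical_valid_Gamma g : Gamma g -> valid canonical_le canonical_rel g.
Proof.
move=> Gg V valV x.
have /boolp.choice [s eqV] : forall n, exists a, V n = U a.
  by move=> n; apply/clopen_upsetP.
rewrite (funext eqV) truth_canonical.
exact/ptheory_thm/ick_subst/ick_gamma.
Qed.

End CanonicalSpace.

Section Soundness.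
Variables (X : topologicalType) (le : X -> X -> Prop)
  (R : set X -> X -> X -> Prop).
Hypothesis cesR : conditional_esakia_space le R.

Let le_refl x : le x x.
Proof. by case: cesR => -[refl _] _ _ _; exact: refl. Qed.

Let le_trans x y z : le x y -> le y z -> le x z.
Proof. by case: cesR => -[_ [_ [trans _]]] _ _ _; exact: trans. Qed.

Lemma truth_Imp V a b : truth le R V (Imp a b) =
  ~` downclosure le (truth le R V a `&` ~` truth le R V b).
Proof.
apply/seteqP; split=> x /=.
  by move=> xab [y [ya nyb] xy]; exact/nyb/xab.
by move=> nxab y xy ya; apply: contrapT => nyb; apply: nxab; exists y.
Qed.

Lemma truth_subst V s f :
  truth le R V (subst s f) = truth le R (fun n => truth le R V (s n)) f.
Proof. by elim: f => //= [a -> b ->|a -> b ->|a -> b ->|a -> b ->]. Qed.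

Lemma clopen_upset_truth V f :
  valuation le V -> clopen_upset le (truth le R V f).
Proof.
have [[_ [_ [_ [_ [_ clopen_down]]]]] clopen_box R_le _] := cesR.
move=> valV; elim: f => [n||a [ca ua] b [cb ub]|a [ca ua] b [cb ub]
  |a [ca ua] b [cb ub]|a [ca ua] b [cb ub]] /=.
- exact: valV.
- by split; [exact: clopen0|move=> x y _].
- split; first exact: clopenI.
  by move=> x y xy [xa xb]; split; [exact: ua xa|exact: ub xb].
- split; first exact: clopenU.
  by move=> x y xy [xa|xb]; [left; exact: ua xa|right; exact: ub xb].
- split; last by move=> x y xy xab z yz; apply: xab; exact: le_trans yz.
  rewrite -/(truth le R V (Imp a b)) truth_Imp; apply: clopenC set0 _.
  exact/clopen_down/clopenI/(clopenC set0 cb).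
- split; first exact: clopen_box.
  move=> x y xy xab z yz; apply: xab; apply/(R_le _ (conj ca ua)).
  by exists y, z.
Qed.

Lemma valid_Iff_truth p q : valid le R (Iff p q) ->
  forall V, valuation le V -> truth le R V p = truth le R V q.
Proof.
move=> pq V valV; apply/seteqP; split=> x xp; have [pq' qp] := pq V valV x.
  exact: pq' x (le_refl x) xp.
exact: qp x (le_refl x) xp.
Qed.

Lemma soundness Gamma f : (forall g, Gamma g -> valid le R g) ->
  ICK Gamma f -> valid le R f.
Proof.
have up V g : valuation le V -> upset le (truth le R V g).
  by move=> valV; have [] := clopen_upset_truth g valV.
move=> validG; elim=> {f} [a b|a b c|a b|a b|a b|a b|a b|a b c|a|g Gg|||
  s f _ IHf|a b _ IHab _ IHa|p q r _ IHpq|p q r _ IHpq] V valV x /=.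
- by move=> y _ ya z yz _; exact: up ya.
- move=> y _ abc z yz ab w zw wa.
  exact: (abc w (le_trans yz zw) wa w (le_refl w) (ab w zw wa)).
- by move=> y _ [].
- by move=> y _ [].
- by move=> y _ ya z yz zb; split=> //; exact: up ya.
- by move=> y _; left.
- by move=> y _; right.
- move=> y _ ac z yz bc w zw [wa|wb]; last exact: bc wb.
  exact: ac w (le_trans yz zw) wa.
- by move=> y _ [].
- exact: validG.
- split=> [y _ bc|y _ [b c] z Rz]; last by split; [exact: b|exact: c].
  by split=> z Rz; have [] := bc z Rz.
- by split=> y _ // _ z _.
- by rewrite truth_subst; apply: IHf => n; exact: clopen_upset_truth.
- exact: (IHab V valV x x (le_refl x) (IHa V valV x)).
- by rewrite (valid_Iff_truth IHpq valV); split=> y _.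
- by rewrite (valid_Iff_truth IHpq valV); split=> y _.
Qed.

End Soundness.

Lemma subst_Var f : subst Var f = f.
Proof. by elim: f => //= [a -> b ->|a -> b ->|a -> b ->|a -> b ->]. Qed.

Theorem theorem4p24 (Gamma : form -> Prop) (phi : form) :
  ICK Gamma phi <->
  (forall (X : topologicalType) (le : X -> X -> Prop)
          (R : set X -> X -> X -> Prop),
     conditional_esakia_space le R ->
     (forall g, Gamma g -> valid le R g) ->
     valid le R phi).
Proof.
split=> [thm_phi X le R cesR validG|valid_phi]; first exact: soundness thm_phi.
apply: ptheory_complete => x.
have := valid_phi _ _ _ (canonical_conditional_esakia Gamma)
  (@canonical_valid_Gamma Gamma) _ (@canonical_valuation Gamma Var) x.
by rewrite truth_canonical subst_Var.
Qed.
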